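(* Let $\Phi:[0,\infty)\to(0,1]$ be a decreasing bijection and let $\phi=-\log\Phi$. Then \[ \int_0^1\frac{1}{u(1\vee\log\Phi^{-1}(u))}\,\mathrm{d}u=\infty \quad\text{if and only if}\quad \sum_{n=1}^\infty\frac{1}{1\vee\log\phi^{-1}(n)}=\infty. \]
   Context: $\Phi^{-1}$ and $\phi^{-1}$ denote the inverse functions of $\Phi$ and $\phi$. *)

From HB Require Import structures.
From mathcomp Require Import all_boot all_order all_algebra.
From mathcomp Require Export all_classical all_reals all_analysis.
Set Implicit Arguments. Unset Strict Implicit. Unset Printing Implicit Defensive.
Import Order.TTheory GRing.Theory Num.Theory.
Local Open Scope ring_scope.

Definition phi_of (R : realType) (Phi : R -> R) : R -> R := fun x => - ln (Phi x).

(* Cut ]0, 1] into the shells ]e^-(k+1), e^-k]. As Phi (phi^-1 t) = e^-t and Phi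
   is decreasing, Phi^-1 maps the k-th shell into [phi^-1 k, phi^-1 (k+1)], while u
   is within a factor e of e^-k there. Hence the integral over the k-th shell lies
   between (1 - 1/e) / (1 v log phi^-1 (k+1)) and (e - 1) / (1 v log phi^-1 k), and
   summing over k the integral and the series diverge together. *)

From HB Require Import structures.
From mathcomp Require Import all_boot all_order all_algebra.
From mathcomp Require Import all_classical all_reals all_analysis.
From mathcomp Require Import ring lra measurable_realfun.
Import Order.TTheory GRing.Theory Num.Theory.
Local Open Scope classical_set_scope.
Local Open Scope ring_scope.

Lemma nondecreasing_in_measurable (R : realType) (a b : R) (D : set R) (f : R -> R) :
  measurable D -> D `<=` [set` `[a, b]] -> {in `[a, b] &, nondecreasing_fun f} ->
  measurable_fun D f.
Proof.
move=> mD Dab f_nd; have [ba|ab] := ltP b a.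
  suff -> : D = set0 by exact: measurable_fun_set0.
  apply/seteqP; split => // u /Dab /=; rewrite in_itv /= => /andP[au ub].
  by move: ba; rewrite ltNge (le_trans au ub).
(* On [a, b], f agrees with f composed with the clamp onto [a, b], which is
   nondecreasing on the whole line. *)
pose c u := Num.max a (Num.min b u).
have c_ab u : c u \in `[a, b].
  by rewrite in_itv /= le_max lexx ge_max ge_min lexx ab /= ?orbT.
apply: (@eq_measurable_fun _ _ _ _ D (f \o c)).
  move=> u; rewrite inE => /Dab /=; rewrite in_itv /= => /andP[au ub].
  by rewrite /c /= (min_idPr ub) (max_idPr au).
apply: nondecreasing_measurable => // u v uv.
by apply: f_nd; rewrite ?c_ab // le_max2 // le_min2.
Qed.

Lemma nonincreasing_in_measurable (R : realType) (a b : R) (D : set R) (f : R -> R) :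
  measurable D -> D `<=` [set` `[a, b]] -> {in `[a, b] &, nonincreasing_fun f} ->
  measurable_fun D f.
Proof.
move=> mD Dab f_ni; rewrite -(opprK f); apply/measurable_funN.
by apply: nondecreasing_in_measurable Dab _ => // u v ua va uv; rewrite lerN2 f_ni.
Qed.

Lemma ge0_integral_cst_bounds {d} {T : measurableType d} {R : realType}
    (mu : {measure set T -> \bar R}) {A : set T} {f : T -> R} {l r m : R} :
  measurable A -> mu A = m%:E -> measurable_fun A f -> 0 <= l ->
  (forall x, A x -> l <= f x <= r) ->
  ((l * m)%:E <= \int[mu]_(x in A) (f x)%:E <= (r * m)%:E)%E.
Proof.
move=> mA muA mf l0 flr; have mfE : measurable_fun A (EFin \o f) by apply/measurable_EFinP.
rewrite !EFinM -muA -!integral_cst //; apply/andP; split; apply: ge0_le_integral => //.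
- by move=> x /flr /andP[lf _]; rewrite lee_fin.
- by move=> x /flr /andP[lf _]; rewrite lee_fin (le_trans l0).
- by move=> x /flr /andP[_ fr]; rewrite lee_fin.
Qed.

Lemma nneseries_pinfty_sandwich {R : realType} {a : nat -> \bar R} {b : nat -> R} {c C : R} :
  0 < c -> (forall k, 0 <= b k) ->
  (forall k, (c * b k.+1)%:E <= a k <= (C * b k)%:E)%E ->
  (\sum_(k <oo) a k = +oo <-> \sum_(1 <= k <oo) (b k)%:E = +oo)%E.
Proof.
move=> c0 b0 ab.
have a0 k : (0 <= a k)%E.
  by case/andP: (ab k) => + _; apply: le_trans; rewrite lee_fin mulr_ge0 // ltW.
split => [suma|sumb].
- have : (+oo <= C%:E * \sum_(k <oo) (b k)%:E)%E.
    rewrite -suma -nneseriesZl; last by move=> k _; rewrite lee_fin.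
    by apply: lee_nneseries => // k _; rewrite -EFinM; case/andP: (ab k).
  rewrite nneseries_recl //; last by move=> k _; rewrite lee_fin.
  have : (0 <= \sum_(1 <= k <oo) (b k)%:E)%E by apply: nneseries_ge0 => k _ _; rewrite lee_fin.
  by case: (\sum_(1 <= k <oo) _)%E.
- apply/eqP; rewrite -leye_eq.
  have <- : (c%:E * \sum_(1 <= k <oo) (b k)%:E = +oo)%E by rewrite sumb gt0_muley // lte_fin.
  rewrite -(@nneseries_addn _ (fun k => (b k)%:E) 1); last by move=> k; rewrite lee_fin.
  rewrite -nneseriesZl; last by move=> k _; rewrite lee_fin.
  by apply: lee_nneseries => [k _ _|k _]; rewrite -EFinM addn1;
    [rewrite lee_fin mulr_ge0 // ltW|case/andP: (ab k)].
Qed.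

Section shells.
Context {R : realType}.

Definition shell (k : nat) : set R := [set` `]expR (- k.+1%:R), expR (- k%:R)]].

Lemma shellP k u : shell k u <-> 0 < u /\ k%:R <= - ln u < k.+1%:R.
Proof.
rewrite /shell /= in_itv /= -natr1; split => [/andP[lo hi]|[u0 /andP[lo hi]]].
- have u0 : 0 < u := lt_trans (expR_gt0 _) lo.
  move: lo hi; rewrite -(lnK u0) ltr_expR ler_expR lnK // => lo hi.
  by split => //; apply/andP; split; lra.
- by rewrite -(lnK u0) ltr_expR ler_expR; apply/andP; split; lra.
Qed.

Lemma bigcup_shell : \bigcup_k shell k = [set` `]0, 1]] :> set R.
Proof.
apply/seteqP; split => [u [k _ /shellP[u0 /andP[lo _]]]|u].
  rewrite /= in_itv /= u0 -(lnK u0) expR_le1.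
  by have : 0 <= k%:R :> R by []; lra.
rewrite /= in_itv /= => /andP[u0 u1]; exists (Num.truncn (- ln u)) => //.
by apply/shellP; split => //; apply: truncn_itv; rewrite oppr_ge0 ln_le0.
Qed.

Lemma trivIset_shell : trivIset setT shell.
Proof.
apply/trivIsetP => i j _ _ ij; apply/seteqP; split => // u [/shellP[_ ui] /shellP[_ uj]].
by move: ij; rewrite -(truncn_def ui) -(truncn_def uj) eqxx.
Qed.

Lemma lebesgue_measure_shell k :
  lebesgue_measure (shell k) = (expR (- k%:R) - expR (- k.+1%:R))%:E.
Proof.
by rewrite lebesgue_measure_itv /= lte_fin ltr_expR ltrN2 ltr_nat ltnSn -EFinB.
Qed.

End shells.

Definition lnmax1 {R : realType} (x : R) : R := Num.max 1 (ln x).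

Lemma lnmax1_gt0 {R : realType} (x : R) : 0 < lnmax1 x.
Proof. by rewrite lt_max ltr01. Qed.

Lemma le_lnmax1 {R : realType} : nondecreasing_fun (@lnmax1 R).
Proof.
move=> x y xy; rewrite /lnmax1 ge_max le_max lexx /= le_max.
have [x0|x0] := leP x 0; first by rewrite ln0 // ler01.
by rewrite ler_ln ?posrE ?(lt_le_trans x0) // xy orbT.
Qed.

Section shell_series.
Context {R : realType} {g h : R -> R}.
Hypothesis g_nonincr : {in `]0, 1] &, nonincreasing_fun g}.
Hypothesis g_shell : forall k u, shell k u -> h k%:R <= g u <= h k.+1%:R.

Lemma measurable_shell_integrand k :
  measurable_fun (shell k) (fun u => (u * lnmax1 (g u))^-1).
Proof.
have shell_sub : (shell k : set R) `<=` [set` `[expR (- k.+1%:R), expR (- k%:R)]].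
  by move=> u; rewrite /shell /= !in_itv /= => /andP[lo hi]; rewrite (ltW lo) hi.
have itv_gt0 (u : R) : u \in `[expR (- k.+1%:R), expR (- k%:R)] -> 0 < u.
  by rewrite in_itv /= => /andP[lo _]; exact: lt_le_trans (expR_gt0 _) lo.
have itv_01 (u : R) : u \in `[expR (- k.+1%:R), expR (- k%:R)] -> u \in `]0, 1].
  move=> uI; rewrite in_itv /= itv_gt0 //.
  by move: uI; rewrite in_itv /= => /andP[_ /le_trans->] //; rewrite expR_le1 oppr_le0.
rewrite (_ : (fun u => _) = (fun u => u^-1 * (lnmax1 (g u))^-1)); last first.
  by apply/funext => u; rewrite invfM.
apply: measurable_funM.
- apply: nonincreasing_in_measurable shell_sub _ => [|u v uI vI uv].
    exact: measurable_itv.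
  by rewrite lef_pV2 ?posrE ?itv_gt0.
- apply: nondecreasing_in_measurable shell_sub _ => [|u v uI vI uv].
    exact: measurable_itv.
  rewrite lef_pV2 ?posrE ?lnmax1_gt0 //.
  by apply: le_lnmax1; apply: g_nonincr; rewrite ?itv_01.
Qed.

Lemma integral_shell_bounds k :
  (((1 - expR (-1)) * (lnmax1 (h k.+1%:R))^-1)%:E <=
     \int[lebesgue_measure]_(u in shell k) ((u * lnmax1 (g u))^-1)%:E <=
   ((expR 1 - 1) * (lnmax1 (h k%:R))^-1)%:E)%E.
Proof.
pose x : R := expR (- k%:R); pose y : R := expR (- k.+1%:R).
have x_ey : x = expR 1 * y by rewrite /x /y -expRD -natr1; congr expR; ring.
have y0 : 0 < y := expR_gt0 _.
have f_bounds u : shell k u ->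
    (x * lnmax1 (h k.+1%:R))^-1 <= (u * lnmax1 (g u))^-1 <= (y * lnmax1 (h k%:R))^-1.
  move=> /[dup] /g_shell /andP[hk_g g_hk1].
  rewrite /shell /= in_itv /= => /andP[yu ux].
  have u0 : 0 < u := lt_trans y0 yu.
  rewrite !lef_pV2 ?posrE ?mulr_gt0 ?lnmax1_gt0 ?(lt_le_trans u0 ux) //.
  apply/andP; split; apply: ler_pM; rewrite ?(ltW (lnmax1_gt0 _)) ?le_lnmax1 //;
    exact: ltW.
have l0 : 0 <= (x * lnmax1 (h k.+1%:R))^-1.
  by rewrite invr_ge0 mulr_ge0 // ltW ?lnmax1_gt0 ?expR_gt0.
have lo_eq : (x * lnmax1 (h k.+1%:R))^-1 * (x - y) =
    (1 - expR (-1)) * (lnmax1 (h k.+1%:R))^-1.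
  by rewrite x_ey expRN; field; rewrite ?gt_eqF ?lnmax1_gt0 ?expR_gt0.
have hi_eq : (y * lnmax1 (h k%:R))^-1 * (x - y) = (expR 1 - 1) * (lnmax1 (h k%:R))^-1.
  by rewrite x_ey; field; rewrite ?gt_eqF ?lnmax1_gt0.
rewrite -lo_eq -hi_eq.
apply: (ge0_integral_cst_bounds lebesgue_measure (A := shell k)) l0 f_bounds.
- exact: measurable_itv.
- exact: lebesgue_measure_shell.
- exact: measurable_shell_integrand.
Qed.

Theorem integral_lnmax1_pinfty_series :
  (\int[lebesgue_measure]_(u in `]0%R, 1%R] : set R) ((u * lnmax1 (g u))^-1)%:E = +oo <->
   \sum_(1 <= n <oo) ((lnmax1 (h n%:R))^-1)%:E = +oo)%E.
Proof.
rewrite -bigcup_shell ge0_integral_bigcup //.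
- apply: (nneseries_pinfty_sandwich (b := fun n => (lnmax1 (h n%:R))^-1)) integral_shell_bounds.
    by rewrite subr_gt0 expR_lt1 ltrN10.
  by move=> n; rewrite invr_ge0 ltW ?lnmax1_gt0.
- move=> k; exact: measurable_itv.
- apply/measurable_fun_bigcup => [k|k]; first exact: measurable_itv.
  by apply/measurable_EFinP; exact: measurable_shell_integrand.
- move=> u [k _ /shellP[u0 _]].
  by rewrite lee_fin invr_ge0 mulr_ge0 ?ltW ?lnmax1_gt0.
- exact: trivIset_shell.
Qed.

End shell_series.

Section decreasing_bijection.
Context {R : realType} {Phi Phiinv phiinv : R -> R}.
Hypothesis Phi_bij : set_bij `[0, +oo[ `]0, 1] Phi.
Hypothesis Phi_decr : {in `[0, +oo[ &, forall x y : R, x <= y -> Phi y <= Phi x}.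
Hypothesis Phiinv_ge0 : forall u : R, 0 < u <= 1 -> 0 <= Phiinv u.
Hypothesis PhiinvK : forall u : R, 0 < u <= 1 -> Phi (Phiinv u) = u.
Hypothesis phiinv_ge0 : forall t : R, 0 <= t -> 0 <= phiinv t.
Hypothesis phiinvK : forall t : R, 0 <= t -> phi_of Phi (phiinv t) = t.

Lemma Phi_gt0 x : 0 <= x -> 0 < Phi x.
Proof.
move=> x0; have /(_ x) := set_bij_homo Phi_bij.
by rewrite /= !in_itv /= andbT => /(_ x0) /andP[].
Qed.

Lemma ler_Phi : {in `[0, +oo[ &, {mono Phi : x y /~ x <= y}}.
Proof.
move=> x y x0 y0; apply/idP/idP => [Pxy|]; last exact: Phi_decr.
rewrite leNgt; apply/negP => xy; move: (xy); rewrite lt_neqAle => /andP[/negP + _].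
apply; apply/eqP/(set_bij_inj Phi_bij); rewrite ?inE //.
by apply/eqP; rewrite eq_le Pxy Phi_decr // ltW.
Qed.

Lemma Phiinv_nonincr : {in `]0, 1] &, nonincreasing_fun Phiinv}.
Proof.
move=> u v u01 v01 uv; rewrite in_itv /= in u01 v01.
by rewrite -ler_Phi ?PhiinvK // in_itv /= andbT Phiinv_ge0.
Qed.

Lemma Phi_phiinv t : 0 <= t -> Phi (phiinv t) = expR (- t).
Proof.
move=> t0; rewrite -{2}(phiinvK t t0) /phi_of opprK lnK // posrE.
exact/Phi_gt0/phiinv_ge0.
Qed.

Lemma Phiinv_shell k u : shell k u -> phiinv k%:R <= Phiinv u <= phiinv k.+1%:R.
Proof.
move=> uk; have u01 : 0 < u <= 1.
  by have : [set` `]0, 1]] u by rewrite -bigcup_shell; exists k.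
move: uk; rewrite /shell /= in_itv /= => /andP[lo hi].
have Phiinv_mem : Phiinv u \in `[0, +oo[ by rewrite in_itv /= andbT Phiinv_ge0.
have phiinv_mem n : phiinv n%:R \in `[0, +oo[ by rewrite in_itv /= andbT phiinv_ge0.
apply/andP; split; rewrite -ler_Phi // PhiinvK // Phi_phiinv //.
exact: ltW.
Qed.

End decreasing_bijection.

Theorem lemma2p2 (R : realType) (Phi Phiinv phiinv : R -> R)
  (Phi_bij : set_bij `[0, +oo[ `]0, 1] Phi)
  (Phi_decr : {in `[0, +oo[ &, forall x y : R, x <= y -> Phi y <= Phi x})
  (Phiinv_ge0 : forall u : R, 0 < u <= 1 -> 0 <= Phiinv u)
  (PhiinvK : forall u : R, 0 < u <= 1 -> Phi (Phiinv u) = u)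
  (phiinv_ge0 : forall t : R, 0 <= t -> 0 <= phiinv t)
  (phiinvK : forall t : R, 0 <= t -> phi_of Phi (phiinv t) = t) :
  (\int[@lebesgue_measure R]_(u in `]0%R, 1%R] : set R)
      ((u * Num.max 1 (ln (Phiinv u)))^-1)%:E = +oo)%E
  <->
  ((\sum_(1 <= n <oo) ((Num.max 1 (ln (phiinv n%:R)))^-1)%:E) = +oo)%E.
Proof.
exact: integral_lnmax1_pinfty_series
  (Phiinv_nonincr Phi_bij Phi_decr Phiinv_ge0 PhiinvK)
  (Phiinv_shell Phi_bij Phi_decr Phiinv_ge0 PhiinvK phiinv_ge0 phiinvK).
Qed.
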